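(* Let $\mathcal{T}$ be a triangulated category with a weak semi-orthogonal decomposition $\mathcal{T}=\langle\mathcal{A},\mathcal{B}\rangle$. Then there is a weak semi-orthogonal decomposition $\widetilde{\mathcal{T}}=\langle\widetilde{\mathcal{A}},\widetilde{\mathcal{B}}\rangle$ of the idempotent completion. Moreover, $\mathcal{T}$ is idempotent complete if and only if $\mathcal{A}$ and $\mathcal{B}$ are idempotent complete.
   Context: A weak semi-orthogonal decomposition $\mathcal{T}=\langle\mathcal{A},\mathcal{B}\rangle$ means $\mathcal{A},\mathcal{B}$ are full triangulated subcategories with $\mathrm{Hom}(B,A)=0$ for all $B\in\mathcal{B}$, $A\in\mathcal{A}$, and every object $T$ fits into an exact triangle $B\to T\to A\to B[1]$ with $B\in\mathcal{B}$, $A\in\mathcal{A}$. An additive category is idempotent complete if every idempotent $e:A\to A$ splits, $A\cong\ker e\oplus\operatorname{im}e$. The idempotent completion $\widetilde{\mathcal{A}}$ has objects pairs $(A,e)$ with $e$ an idempotent endomorphism of $A$, and morphisms $(A,e)\to(A',e')$ the morphisms $f:A\to A'$ with $fe=e'f=f$. For a triangulated $\mathcal{T}$, $\widetilde{\mathcal{T}}$ carries a unique triangulated structure making $\mathcal{T}\to\widetilde{\mathcal{T}}$ exact, whose exact triangles are the retracts of exact triangles of $\mathcal{T}$ (Balmer–Schlichting). *)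

From Corelib Require Import ssreflect.
Set Implicit Arguments.
Unset Strict Implicit.

Record TriRaw := {
  Obj : Type;
  Hom : Obj -> Obj -> Type;
  idm : forall X, Hom X X;
  comp : forall X Y Z, Hom Y Z -> Hom X Y -> Hom X Z;
  zerom : forall X Y, Hom X Y;
  shO : Obj -> Obj;
  shH : forall X Y, Hom X Y -> Hom (shO X) (shO Y);
  dist : forall X Y Z, Hom X Y -> Hom Y Z -> Hom Z (shO X) -> Prop
}.
Arguments Obj t : clear implicits.
Arguments Hom t _ _ : clear implicits.
Arguments idm {t} X.
Arguments comp {t X Y Z} _ _.
Arguments zerom {t} X Y.
Arguments shO {t} _.
Arguments shH {t X Y} _.
Arguments dist {t X Y Z} _ _ _.

Section RawNotions.
Context {T : TriRaw}.

Definition is_iso (X Y : Obj T) (f : Hom T X Y) : Prop :=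
  exists g : Hom T Y X, comp g f = idm X /\ comp f g = idm Y.

Definition isomorphic (X Y : Obj T) : Prop := exists f : Hom T X Y, is_iso f.

Definition is_zero_obj (Z : Obj T) : Prop :=
  (forall X (f g : Hom T Z X), f = g) /\ (forall X (f g : Hom T X Z), f = g).

(* A full triangulated subcategory, given by its class of objects P
   (not assumed closed under isomorphism). *)
Definition triang_subcat (P : Obj T -> Prop) : Prop :=
  (exists X, P X) /\
  (forall X, P X -> P (shO X)) /\
  (forall X, P X -> exists Y, P Y /\ isomorphic (shO Y) X) /\
  (forall X Y Z (f : Hom T X Y) (g : Hom T Y Z) (h : Hom T Z (shO X)),
      dist f g h -> P X -> P Y -> exists Z', P Z' /\ isomorphic Z Z').

Definition weakSOD (A B : Obj T -> Prop) : Prop :=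
  triang_subcat A /\ triang_subcat B /\
  (forall Bo Ao, B Bo -> A Ao -> forall f : Hom T Bo Ao, f = zerom Bo Ao) /\
  (forall X, exists Bo Ao (b : Hom T Bo X) (a : Hom T X Ao) (c : Hom T Ao (shO Bo)),
      B Bo /\ A Ao /\ dist b a c).
End RawNotions.

Section TriAxioms.
Variable T : TriRaw.
Variable addm : forall X Y, Hom T X Y -> Hom T X Y -> Hom T X Y.
Variable oppm : forall X Y, Hom T X Y -> Hom T X Y.
Arguments addm {X Y}.
Arguments oppm {X Y}.
Implicit Types X Y Z W S Q : Obj T.

Record TriLaws : Prop := {
  comp_assoc : forall X Y Z W (f : Hom T X Y) (g : Hom T Y Z) (h : Hom T Z W),
      comp h (comp g f) = comp (comp h g) f;
  comp_idl : forall X Y (f : Hom T X Y), comp (idm Y) f = f;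
  comp_idr : forall X Y (f : Hom T X Y), comp f (idm X) = f;
  add_assoc : forall X Y (f g h : Hom T X Y), addm f (addm g h) = addm (addm f g) h;
  add_comm : forall X Y (f g : Hom T X Y), addm f g = addm g f;
  add_0 : forall X Y (f : Hom T X Y), addm f (zerom X Y) = f;
  add_opp : forall X Y (f : Hom T X Y), addm f (oppm f) = zerom X Y;
  comp_addl : forall X Y Z (f g : Hom T Y Z) (h : Hom T X Y),
      comp (addm f g) h = addm (comp f h) (comp g h);
  comp_addr : forall X Y Z (f : Hom T Y Z) (g h : Hom T X Y),
      comp f (addm g h) = addm (comp f g) (comp f h);
  comp_0l : forall X Y Z (h : Hom T X Y), comp (zerom Y Z) h = zerom X Z;
  comp_0r : forall X Y Z (f : Hom T Y Z), comp f (zerom X Y) = zerom X Z;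
  has_zero : exists Z : Obj T, is_zero_obj Z;
  has_biprod : forall X Y, exists S (iX : Hom T X S) (iY : Hom T Y S)
      (pX : Hom T S X) (pY : Hom T S Y),
      comp pX iX = idm X /\ comp pY iY = idm Y /\
      comp pX iY = zerom Y X /\ comp pY iX = zerom X Y /\
      addm (comp iX pX) (comp iY pY) = idm S;
  sh_id : forall X, shH (idm X) = idm (shO X);
  sh_comp : forall X Y Z (f : Hom T X Y) (g : Hom T Y Z),
      shH (comp g f) = comp (shH g) (shH f);
  sh_add : forall X Y (f g : Hom T X Y), shH (addm f g) = addm (shH f) (shH g);
  sh_faithful : forall X Y (f g : Hom T X Y), shH f = shH g -> f = g;
  sh_full : forall X Y (f : Hom T (shO X) (shO Y)), exists g, shH g = f;
  sh_esurj : forall Y, exists X, isomorphic (shO X) Y;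
  tr1_iso : forall X Y Z X' Y' Z' (f : Hom T X Y) (g : Hom T Y Z) (h : Hom T Z (shO X))
      (f' : Hom T X' Y') (g' : Hom T Y' Z') (h' : Hom T Z' (shO X'))
      (a : Hom T X X') (b : Hom T Y Y') (c : Hom T Z Z'),
      dist f g h -> is_iso a -> is_iso b -> is_iso c ->
      comp b f = comp f' a -> comp c g = comp g' b -> comp (shH a) h = comp h' c ->
      dist f' g' h';
  tr1_id : forall X Z, is_zero_obj Z -> dist (idm X) (zerom X Z) (zerom Z (shO X));
  tr1_ext : forall X Y (f : Hom T X Y), exists Z (g : Hom T Y Z) (h : Hom T Z (shO X)),
      dist f g h;
  tr2 : forall X Y Z (f : Hom T X Y) (g : Hom T Y Z) (h : Hom T Z (shO X)),
      dist f g h <-> dist g h (oppm (shH f));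
  tr3 : forall X Y Z X' Y' Z' (f : Hom T X Y) (g : Hom T Y Z) (h : Hom T Z (shO X))
      (f' : Hom T X' Y') (g' : Hom T Y' Z') (h' : Hom T Z' (shO X'))
      (a : Hom T X X') (b : Hom T Y Y'),
      dist f g h -> dist f' g' h' -> comp b f = comp f' a ->
      exists c : Hom T Z Z', comp c g = comp g' b /\ comp (shH a) h = comp h' c;
  tr4 : forall X Y Z Q1 Q2 Q3 (f : Hom T X Y) (g : Hom T Y Z)
      (p1 : Hom T Y Q1) (d1 : Hom T Q1 (shO X))
      (p2 : Hom T Z Q2) (d2 : Hom T Q2 (shO X))
      (p3 : Hom T Z Q3) (d3 : Hom T Q3 (shO Y)),
      dist f p1 d1 -> dist (comp g f) p2 d2 -> dist g p3 d3 ->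
      exists (a : Hom T Q1 Q2) (b : Hom T Q2 Q3),
        dist a b (comp (shH p1) d3) /\
        comp a p1 = comp p2 g /\ comp d2 a = d1 /\
        comp b p2 = p3 /\ comp d3 b = comp (shH f) d2
}.
End TriAxioms.

Record TriCat := {
  traw :> TriRaw;
  addm : forall X Y, Hom traw X Y -> Hom traw X Y -> Hom traw X Y;
  oppm : forall X Y, Hom traw X Y -> Hom traw X Y;
  tri_laws : TriLaws addm oppm
}.
Arguments addm {t X Y} _ _.
Arguments oppm {t X Y} _.

Section IdemComplete.
Context {T : TriCat}.

Definition idem_splits (P : Obj T -> Prop) (A : Obj T) (e : Hom T A A) : Prop :=
  exists K I (iK : Hom T K A) (pK : Hom T A K) (iI : Hom T I A) (pI : Hom T A I),
    P K /\ P I /\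
    comp pK iK = idm K /\ comp pI iI = idm I /\
    comp pK iI = zerom I K /\ comp pI iK = zerom K I /\
    addm (comp iK pK) (comp iI pI) = idm A /\
    comp iI pI = e.

Definition idem_complete (P : Obj T -> Prop) : Prop :=
  forall A (e : Hom T A A), P A -> comp e e = e -> idem_splits P e.
End IdemComplete.

Section IdemCompletion.
Variable T : TriCat.
Let L := tri_laws T.

Record IObj := { iob : Obj T; iid : Hom T iob iob; iid_idem : comp iid iid = iid }.

Record IHom (X Y : IObj) := {
  ihom : Hom T (iob X) (iob Y);
  ihom_r : comp ihom (iid X) = ihom;
  ihom_l : comp (iid Y) ihom = ihom }.
Arguments ihom {X Y} _.

Definition Iid (X : IObj) : IHom X X :=
  @Build_IHom X X (iid X) (iid_idem X) (iid_idem X).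

Lemma Icomp_r (X Y Z : IObj) (g : IHom Y Z) (f : IHom X Y) :
  comp (comp (ihom g) (ihom f)) (iid X) = comp (ihom g) (ihom f).
Proof. by rewrite -(comp_assoc L) (ihom_r f). Qed.

Lemma Icomp_l (X Y Z : IObj) (g : IHom Y Z) (f : IHom X Y) :
  comp (iid Z) (comp (ihom g) (ihom f)) = comp (ihom g) (ihom f).
Proof. by rewrite (comp_assoc L) (ihom_l g). Qed.

Definition Icomp (X Y Z : IObj) (g : IHom Y Z) (f : IHom X Y) : IHom X Z :=
  Build_IHom (Icomp_r g f) (Icomp_l g f).

Definition Izero (X Y : IObj) : IHom X Y :=
  @Build_IHom X Y (zerom _ _) (comp_0l L _ _) (comp_0r L _ _).

Lemma ish_idem (X : IObj) : comp (shH (iid X)) (shH (iid X)) = shH (iid X).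
Proof. by rewrite -(sh_comp L) (iid_idem X). Qed.

Definition IshO (X : IObj) : IObj := Build_IObj (ish_idem X).

Lemma Ish_r (X Y : IObj) (f : IHom X Y) :
  comp (shH (ihom f)) (iid (IshO X)) = shH (ihom f).
Proof. by rewrite /= -(sh_comp L) (ihom_r f). Qed.

Lemma Ish_l (X Y : IObj) (f : IHom X Y) :
  comp (iid (IshO Y)) (shH (ihom f)) = shH (ihom f).
Proof. by rewrite /= -(sh_comp L) (ihom_l f). Qed.

Definition IshH (X Y : IObj) (f : IHom X Y) : IHom (IshO X) (IshO Y) :=
  @Build_IHom (IshO X) (IshO Y) (shH (ihom f)) (Ish_r f) (Ish_l f).

(* (X,eX) -f-> (Y,eY) -g-> (Z,eZ) -h-> (X[1],eX[1]) is exact iff it is a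
   retract (in the idempotent completion) of the image of an exact triangle
   X' -f'-> Y' -g'-> Z' -h'-> X'[1] of T (objects (X',1), ...). *)
Definition Idist (X Y Z : IObj) (f : IHom X Y) (g : IHom Y Z) (h : IHom Z (IshO X))
  : Prop :=
  exists X' Y' Z' (f' : Hom T X' Y') (g' : Hom T Y' Z') (h' : Hom T Z' (shO X'))
    (iX : Hom T (iob X) X') (pX : Hom T X' (iob X))
    (iY : Hom T (iob Y) Y') (pY : Hom T Y' (iob Y))
    (iZ : Hom T (iob Z) Z') (pZ : Hom T Z' (iob Z)),
    dist f' g' h' /\
    comp iX (iid X) = iX /\ comp iY (iid Y) = iY /\ comp iZ (iid Z) = iZ /\
    comp iY (ihom f) = comp f' iX /\ comp iZ (ihom g) = comp g' iY /\
    comp (shH iX) (ihom h) = comp h' iZ /\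
    comp (iid X) pX = pX /\ comp (iid Y) pY = pY /\ comp (iid Z) pZ = pZ /\
    comp pY f' = comp (ihom f) pX /\ comp pZ g' = comp (ihom g) pY /\
    comp (shH pX) h' = comp (ihom h) pZ /\
    comp pX iX = iid X /\ comp pY iY = iid Y /\ comp pZ iZ = iid Z.

Definition IdemComp : TriRaw :=
  {| Obj := IObj; Hom := IHom; idm := Iid; comp := Icomp; zerom := Izero;
     shO := IshO; shH := IshH; dist := Idist |}.

Definition Itilde (P : Obj T -> Prop) : Obj IdemComp -> Prop :=
  fun X => P (iob X).
End IdemCompletion.

(* Orthogonality makes the decomposition triangle B -> X -> A -> B[1] of an
   object functorial: an idempotent e of X induces idempotents of B and A
   compatible with the triangle.  This gives the decomposition triangles of the
   idempotent completion, in which an object receiving no nonzero map from B is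
   isomorphic to a completed A-object; hence the completions of A and B are
   again closed under cones.

   A retract of an object of A (resp. B) is isomorphic to an object of A
   (resp. B), so A and B inherit idempotent completeness from T.  Conversely, if
   the induced idempotents of B and A split with images B' and A', a triangle
   B' -> Y -> A' -> B'[1] with the induced connecting map carries maps
   X -> Y -> X whose composites differ from 1 and from e by endomorphisms
   factoring as B -> X -> A.  Such endomorphisms are square-zero, even after
   inserting any endomorphism in the middle, and correcting by them splits e. *)
From Corelib Require Import ssreflect.
From Stdlib Require Import ProofIrrelevance.
Set Implicit Arguments.
Unset Strict Implicit.

Declare Scope tc_scope.
Local Notation "g \o f" := (comp g f) (at level 40, left associativity) : tc_scope.
Local Notation "f + g" := (addm f g) : tc_scope.
Local Notation "- f" := (oppm f) : tc_scope.
Local Notation "f - g" := (addm f (oppm g)) : tc_scope.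
Local Notation "0" := (zerom _ _) : tc_scope.
Local Notation "1" := (idm _) : tc_scope.
Local Open Scope tc_scope.

Section Preadditive.
Variable T : TriCat.
Let L := tri_laws T.
Implicit Types X Y Z W : Obj T.

Lemma compA X Y Z W (h : Hom T Z W) (g : Hom T Y Z) (f : Hom T X Y) :
  h \o (g \o f) = h \o g \o f.
Proof. exact: (comp_assoc L). Qed.
Lemma compA_eq W X Y Z (f : Hom T X Y) (g : Hom T Y Z) (h : Hom T X Z) :
  g \o f = h -> forall x : Hom T W X, g \o (f \o x) = h \o x.
Proof. by move=> E x; rewrite compA E. Qed.
Lemma comp1m X Y (f : Hom T X Y) : 1 \o f = f. Proof. exact: (comp_idl L). Qed.
Lemma compm1 X Y (f : Hom T X Y) : f \o 1 = f. Proof. exact: (comp_idr L). Qed.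
Lemma comp0m X Y Z (f : Hom T X Y) : zerom Y Z \o f = 0. Proof. exact: (comp_0l L). Qed.
Lemma compm0 X Y Z (f : Hom T Y Z) : f \o zerom X Y = 0. Proof. exact: (comp_0r L). Qed.
Lemma compDl X Y Z (f g : Hom T Y Z) (h : Hom T X Y) : (f + g) \o h = f \o h + g \o h.
Proof. exact: (comp_addl L). Qed.
Lemma compDr X Y Z (f : Hom T Y Z) (g h : Hom T X Y) : f \o (g + h) = f \o g + f \o h.
Proof. exact: (comp_addr L). Qed.
Lemma addmA X Y (f g h : Hom T X Y) : f + (g + h) = f + g + h. Proof. exact: (add_assoc L). Qed.
Lemma addmC X Y (f g : Hom T X Y) : f + g = g + f. Proof. exact: (add_comm L). Qed.
Lemma addm0 X Y (f : Hom T X Y) : f + zerom X Y = f. Proof. exact: (add_0 L). Qed.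
Lemma add0m X Y (f : Hom T X Y) : zerom X Y + f = f. Proof. by rewrite addmC addm0. Qed.
Lemma addmN X Y (f : Hom T X Y) : f - f = 0. Proof. exact: (add_opp L). Qed.
Lemma addNm X Y (f : Hom T X Y) : - f + f = 0. Proof. by rewrite addmC addmN. Qed.
Lemma addmI X Y (f g h : Hom T X Y) : f + g = f + h -> g = h.
Proof. by move=> E; rewrite -(add0m g) -(add0m h) -(addNm f) -!addmA E. Qed.
Lemma oppm_eq X Y (f g : Hom T X Y) : f + g = 0 -> g = - f.
Proof. by move=> E; apply: (addmI (f := f)); rewrite E addmN. Qed.
Lemma oppmK X Y (f : Hom T X Y) : - - f = f.
Proof. by symmetry; apply: oppm_eq; rewrite addNm. Qed.
Lemma oppm_inj X Y (f g : Hom T X Y) : - f = - g -> f = g.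
Proof. by move=> E; rewrite -(oppmK f) E oppmK. Qed.
Lemma oppm0 X Y : - zerom X Y = 0.
Proof. by symmetry; apply: oppm_eq; rewrite addm0. Qed.
Lemma subm_eq0 X Y (f g : Hom T X Y) : f - g = 0 -> f = g.
Proof. by move/oppm_eq/oppm_inj. Qed.
Lemma submK X Y (f g : Hom T X Y) : g + (f - g) = f.
Proof. by rewrite (addmC f) addmA addmN add0m. Qed.
Lemma compNl X Y Z (f : Hom T Y Z) (h : Hom T X Y) : (- f) \o h = - (f \o h).
Proof. by apply: oppm_eq; rewrite -compDl addmN comp0m. Qed.
Lemma compNr X Y Z (f : Hom T Y Z) (h : Hom T X Y) : f \o (- h) = - (f \o h).
Proof. by apply: oppm_eq; rewrite -compDr addmN compm0. Qed.
Lemma compBl X Y Z (f g : Hom T Y Z) (h : Hom T X Y) : (f - g) \o h = f \o h - g \o h.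
Proof. by rewrite compDl compNl. Qed.
Lemma compBr X Y Z (f : Hom T Y Z) (g h : Hom T X Y) : f \o (g - h) = f \o g - f \o h.
Proof. by rewrite compDr compNr. Qed.

Lemma shH1 X : shH (idm X) = 1. Proof. exact: (sh_id L). Qed.
Lemma shH_comp X Y Z (f : Hom T X Y) (g : Hom T Y Z) : shH (g \o f) = shH g \o shH f.
Proof. exact: (sh_comp L). Qed.
Lemma shH0 X Y : shH (zerom X Y) = 0.
Proof.
by apply: (addmI (f := shH (zerom X Y))); rewrite -(sh_add L) !addm0.
Qed.
Lemma shH_inj X Y (f g : Hom T X Y) : shH f = shH g -> f = g.
Proof. exact: (sh_faithful L). Qed.

End Preadditive.

Section Idempotents.
Variable T : TriCat.
Implicit Types X Y : Obj T.

Lemma idem_perturb X (u e : Hom T X X) :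
  u \o u = u -> e \o e = e -> (u - e) \o (u - e) = 0 -> (u - e) \o e \o (u - e) = 0 ->
  u \o e \o u = u /\ e \o u \o e = e.
Proof.
move=> uu ee.
have ud : u = e + (u - e) by rewrite submK.
move: (u - e) ud => d ud dd ded; subst u.
have e2 := compA_eq ee.
have uu' := uu; rewrite !compDl !compDr ee dd addm0 in uu'.
split.
- have ded' : d \o (e \o d) = 0 by rewrite compA.
  by rewrite -compA compDr !compDl !compDr ee e2 ded' addm0 ee.
- have edde : e \o d + d \o e = d by apply: (addmI (f := e)); rewrite addmA.
  have ede : e \o (d \o e) = 0.
    have := f_equal (fun x => e \o (x \o e)) edde => /=.
    rewrite compDl compDr -compA e2 -(compA d) ee => E.
    by apply: (addmI (f := e \o (d \o e))); rewrite E addm0.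
  by rewrite -compA compDl compDr ede addm0 e2 ee.
Qed.

Lemma idem_retract_perturb X Y (e : Hom T X X) (r : Hom T X Y) (s : Hom T Y X) :
  e \o e = e -> r \o s = 1 ->
  (s \o r - e) \o (s \o r - e) = 0 -> (s \o r - e) \o e \o (s \o r - e) = 0 ->
  r \o e \o (e \o s) = 1 /\ e \o s \o (r \o e) = e.
Proof.
move=> ee rs d2 ded.
have uu : s \o r \o (s \o r) = s \o r by rewrite -compA (compA_eq rs) comp1m.
have [ueu eue] := idem_perturb uu ee d2 ded.
split; last by rewrite compA -(compA e s r) eue.
have := f_equal (fun x => r \o x \o s) ueu => /=.
rewrite -!compA !(compA_eq rs) !comp1m rs compm1 => <-.
by rewrite (compA_eq ee).
Qed.

Lemma idem_splits_of_retracts X (e : Hom T X X) : e \o e = e ->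
  (exists I (rI : Hom T X I) (sI : Hom T I X), rI \o sI = 1 /\ sI \o rI = e) ->
  (exists K (rK : Hom T X K) (sK : Hom T K X), rK \o sK = 1 /\ sK \o rK = 1 - e) ->
  idem_splits (fun _ => True) e.
Proof.
move=> ee [I [rI [sI [rsI srI]]]] [K [rK [sK [rsK srK]]]].
have e_e' : e \o (1 - e) = 0 by rewrite compBr compm1 ee addmN.
have e'_e : (1 - e) \o e = 0 by rewrite compBl comp1m ee addmN.
exists K, I, sK, rK, sI, rI; do 4 split => //.
split.
  have -> : rK \o sI = rK \o (sK \o rK) \o (sI \o rI) \o sI.
    by rewrite -!compA rsI compm1 (compA_eq rsK) comp1m.
  by rewrite srK srI -(compA _ (1 - e)) e'_e compm0 comp0m.
split.
  have -> : rI \o sK = rI \o (sI \o rI) \o (sK \o rK) \o sK.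
    by rewrite -!compA rsK compm1 (compA_eq rsI) comp1m.
  by rewrite srK srI -(compA _ e) e_e' compm0 comp0m.
by rewrite srK srI addmC submK.
Qed.

Lemma idem_complete_retract (P : Obj T -> Prop) X (e : Hom T X X) :
  idem_complete P -> P X -> e \o e = e ->
  exists Y (r : Hom T X Y) (s : Hom T Y X), P Y /\ r \o s = 1 /\ s \o r = e.
Proof.
move=> C hX ee.
have [K [I [iK [pK [iI [pI [_ [hI [_ [pi [_ [_ [_ ip]]]]]]]]]]]]] := C X e hX ee.
by exists I, pI, iI.
Qed.

Lemma idem_splits_replete (P : Obj T -> Prop) X (e : Hom T X X) :
  (forall K (i : Hom T K X) (p : Hom T X K), p \o i = 1 ->
     exists K', P K' /\ isomorphic K K') ->
  idem_splits (fun _ => True) e -> idem_splits P e.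
Proof.
move=> repl [K [I [iK [pK [iI [pI [_ [_ [pKiK [pIiI [pKiI [pIiK [sum ip]]]]]]]]]]]]].
have [K' [hK [k [k' [k'k kk']]]]] := repl _ _ _ pKiK.
have [I' [hI [l [l' [l'l ll']]]]] := repl _ _ _ pIiI.
exists K', I', (iK \o k'), (k \o pK), (iI \o l'), (l \o pI).
have kK : iK \o k' \o (k \o pK) = iK \o pK by rewrite -!compA (compA_eq k'k) comp1m.
have lI : iI \o l' \o (l \o pI) = iI \o pI by rewrite -!compA (compA_eq l'l) comp1m.
do 2 split => //.
split; first by rewrite -!compA (compA_eq pKiK) comp1m.
split; first by rewrite -!compA (compA_eq pIiI) comp1m.
split; first by rewrite -!compA (compA_eq pKiI) comp0m compm0.
split; first by rewrite -!compA (compA_eq pIiK) comp0m compm0.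
by rewrite kK lI.
Qed.

End Idempotents.

Section Triangulated.
Variable T : TriCat.
Let L := tri_laws T.
Implicit Types X Y Z W : Obj T.

Lemma zero_obj_shift Z : is_zero_obj Z -> is_zero_obj (shO Z).
Proof.
move=> [Zl Zr].
have E : idm (shO Z) = 0 by rewrite -shH1 (Zl _ (idm Z) 0) shH0.
split=> X f g.
- by rewrite -(compm1 f) -(compm1 g) E !compm0.
- by rewrite -(comp1m f) -(comp1m g) E !comp0m.
Qed.

Lemma dist_rot X Y Z (f : Hom T X Y) (g : Hom T Y Z) (h : Hom T Z (shO X)) :
  dist f g h -> dist g h (- shH f).
Proof. by move/(tr2 L). Qed.

Lemma dist_extend X Y Z W (f : Hom T X Y) (g : Hom T Y Z) (h : Hom T Z (shO X))
    (v : Hom T Y W) :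
  dist f g h -> v \o f = 0 -> exists s : Hom T Z W, s \o g = v.
Proof.
move=> D Hv; have [O Oz] := has_zero L.
have DW : dist (zerom O W) (idm W) (zerom W (shO O)).
  apply/(tr2 L).
  rewrite (proj1 (zero_obj_shift Oz) _ (- shH (zerom O W)) 0).
  exact: (tr1_id L W (zero_obj_shift Oz)).
have E : v \o f = zerom O W \o zerom X O by rewrite Hv comp0m.
have [s [Es _]] := tr3 L D DW E.
by exists s; rewrite Es comp1m.
Qed.

Lemma dist_lift X Y Z W (f : Hom T X Y) (g : Hom T Y Z) (h : Hom T Z (shO X))
    (u : Hom T W Y) :
  dist f g h -> g \o u = 0 -> exists t : Hom T W X, f \o t = u.
Proof.
move=> D Hu; have [O Oz] := has_zero L.
have E : zerom O Z \o zerom W O = g \o u by rewrite Hu comp0m.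
have [c [_ Ec]] := tr3 L (dist_rot (tr1_id L W Oz)) (dist_rot D) E.
have [t Ht] := sh_full L c.
exists t; apply: shH_inj; apply: oppm_inj.
by rewrite shH_comp Ht -compNl -Ec shH1 compNr compm1.
Qed.

Lemma dist_of_third_map X Z (h : Hom T Z (shO X)) :
  exists Y (f : Hom T X Y) (g : Hom T Y Z), dist f g h.
Proof.
have [V [u [u' [Eu'u Euu']]]] := sh_esurj L Z.
have [w Hw] := sh_full L (- (h \o u)).
have [Y [f [g D]]] := tr1_ext L w.
have DY := dist_rot D; rewrite Hw oppmK in DY.
exists Y, f, (u \o g).
apply: (tr1_iso L DY (a := idm X) (b := idm Y) (c := u)).
- by exists (idm X); rewrite comp1m.
- by exists (idm Y); rewrite comp1m.
- by exists u'.
- by rewrite comp1m compm1.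
- by rewrite compm1.
- by rewrite shH1 comp1m.
Qed.

Lemma dist_fill_middle X0 Y0 Z0 X1 Y1 Z1
    (f : Hom T X0 Y0) (g : Hom T Y0 Z0) (h : Hom T Z0 (shO X0))
    (f' : Hom T X1 Y1) (g' : Hom T Y1 Z1) (h' : Hom T Z1 (shO X1))
    (x : Hom T X0 X1) (z : Hom T Z0 Z1) :
  dist f g h -> dist f' g' h' -> shH x \o h = h' \o z ->
  exists y : Hom T Y0 Y1, y \o f = f' \o x /\ z \o g = g' \o y.
Proof.
move=> D D' E.
have [k [Ek1 Ek2]] := tr3 L (dist_rot (dist_rot D)) (dist_rot (dist_rot D')) E.
have [y Hy] := sh_full L k; subst k.
exists y; split; apply: shH_inj; apply: oppm_inj.
- by rewrite !shH_comp -compNr Ek1 compNl.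
- by rewrite !shH_comp -compNr Ek2 compNl.
Qed.

End Triangulated.

Section SemiOrthogonal.
Variable T : TriCat.
Let L := tri_laws T.
Variables A B : Obj T -> Prop.
Hypothesis H : weakSOD A B.

Lemma sod_orth Bo Ao (f : Hom T Bo Ao) : B Bo -> A Ao -> f = 0.
Proof. by move=> hB hA; case: H => _ [_ [O _]]; apply: O. Qed.
Lemma sod_shift_A X : A X -> A (shO X).
Proof. by case: H => [[_ [S _]] _]; apply: S. Qed.
Lemma sod_shift_B X : B X -> B (shO X).
Proof. by case: H => [_ [[_ [S _]] _]]; apply: S. Qed.
Lemma sod_triangle X : exists Bo Ao (b : Hom T Bo X) (a : Hom T X Ao)
  (c : Hom T Ao (shO Bo)), B Bo /\ A Ao /\ dist b a c.
Proof. by case: H => _ [_ [_ D]]; apply: D. Qed.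

Section DecompositionTriangle.
Variables (B0 X0 A0 : Obj T) (b : Hom T B0 X0) (a : Hom T X0 A0) (c : Hom T A0 (shO B0)).
Hypotheses (D : dist b a c) (hB : B B0) (hA : A A0).

Lemma sod_mono W (u : Hom T W B0) : B W -> b \o u = 0 -> u = 0.
Proof.
move=> hW Hu.
have E : (- shH b) \o shH u = 0 by rewrite compNl -shH_comp Hu shH0 oppm0.
have [t Ht] := dist_lift (dist_rot (dist_rot D)) E.
rewrite (sod_orth t (sod_shift_B hW) hA) compm0 -(shH0 W B0) in Ht.
by symmetry; apply: shH_inj.
Qed.

Lemma sod_epi W (v : Hom T A0 W) : A W -> v \o a = 0 -> v = 0.
Proof.
move=> hW Hv.
have [s Hs] := dist_extend (dist_rot D) Hv.
by rewrite -Hs (sod_orth s (sod_shift_B hB) hW) comp0m.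
Qed.

(* Such a d factors as b \o t \o a, and a \o x \o b : B0 -> A0 always vanishes. *)
Lemma sod_nil (d : Hom T X0 X0) : d \o b = 0 -> a \o d = 0 ->
  forall x : Hom T X0 X0, d \o x \o d = 0.
Proof.
move=> db ad x.
have [s Hs] := dist_extend D db.
have [t Ht] : exists t, b \o t = s.
  apply: (dist_lift D); apply: (sod_epi hA).
  by rewrite -compA Hs ad.
rewrite -Hs -Ht !compA.
have -> : b \o t \o a \o x \o b = b \o t \o (a \o x \o b) by rewrite !compA.
by rewrite (sod_orth (a \o x \o b) hB hA) compm0 !comp0m.
Qed.

Lemma sod_right_inverse (m : Hom T X0 X0) : (m - 1) \o b = 0 -> a \o (m - 1) = 0 ->
  exists m', m \o m' = 1 /\ m' \o b = b /\ a \o m' = a.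
Proof.
move=> nb an; set n := m - 1.
have nn : n \o n = 0 by have := sod_nil nb an 1; rewrite compm1.
exists (1 - n); split; last split.
- have -> : m = 1 + n by rewrite /n submK.
  by rewrite compDl comp1m compBr compm1 nn oppm0 addm0 addmC submK.
- by rewrite compBl comp1m nb oppm0 addm0.
- by rewrite compBr compm1 an oppm0 addm0.
Qed.

Lemma sod_idem_retract_perturb (e : Hom T X0 X0) Y (r : Hom T X0 Y) (s : Hom T Y X0) :
  e \o e = e -> r \o s = 1 -> (s \o r - e) \o b = 0 -> a \o (s \o r - e) = 0 ->
  exists (r' : Hom T X0 Y) (s' : Hom T Y X0), r' \o s' = 1 /\ s' \o r' = e.
Proof.
move=> ee rs db ad.
have dd := sod_nil db ad.
have dd1 := dd 1; rewrite compm1 in dd1.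
have [res esre] := idem_retract_perturb ee rs dd1 (dd e).
by exists (r \o e), (e \o s).
Qed.

Lemma sod_lift_idem (e : Hom T X0 X0) : e \o e = e ->
  exists (eB : Hom T B0 B0) (eA : Hom T A0 A0),
    e \o b = b \o eB /\ a \o e = eA \o a /\ eB \o eB = eB /\ eA \o eA = eA /\
    c \o eA = shH eB \o c.
Proof.
move=> He.
have [eA HA] : exists eA, eA \o a = a \o e.
  by apply: (dist_extend D); rewrite -compA; apply: sod_orth.
have [eB HB] : exists eB, b \o eB = e \o b.
  by apply: (dist_lift D); rewrite compA; apply: sod_orth.
have IB : eB \o eB = eB.
  apply: subm_eq0; apply: (sod_mono hB).
  by rewrite compBr compA HB -compA HB compA He addmN.
have IA : eA \o eA = eA.
  apply: subm_eq0; apply: (sod_epi hA).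
  by rewrite compBl -compA HA compA HA -compA He addmN.
have [g [Hg1 Hg2]] := tr3 L D D (eq_sym HB).
have Eg : g = eA.
  apply: subm_eq0; apply: (sod_epi hA).
  by rewrite compBl Hg1 HA addmN.
by subst g; exists eB, eA; rewrite HB HA.
Qed.

End DecompositionTriangle.
End SemiOrthogonal.

Section IdempotentCompletion.
Variable T : TriCat.
Let L := tri_laws T.
Let IT := IdemComp T.

Lemma IHom_eq (X Y : IObj T) (f g : IHom X Y) : ihom f = ihom g -> f = g.
Proof.
case: f g => f f_r f_l [g g_r g_l] /= E; subst g.
by rewrite (proof_irrelevance _ f_r g_r) (proof_irrelevance _ f_l g_l).
Qed.

(* The isomorphism is given by a \o iid X and iid X \o v. *)
Lemma Iisomorphic_factor (X Y : IObj T) (a : Hom T (iob X) (iob Y))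
    (v : Hom T (iob Y) (iob X)) :
  v \o a = iid X -> iid Y = a \o iid X \o v -> isomorphic (T := IT) X Y.
Proof.
move=> va eY; have e2 := compA_eq (iid_idem X).
have f_r : a \o iid X \o iid X = a \o iid X by rewrite -compA iid_idem.
have f_l : iid Y \o (a \o iid X) = a \o iid X.
  by rewrite eY -!compA (compA_eq va) e2 iid_idem.
have g_r : iid X \o v \o iid Y = iid X \o v.
  by rewrite eY -!compA (compA_eq va) !e2.
have g_l : iid X \o (iid X \o v) = iid X \o v by rewrite e2.
exists (Build_IHom f_r f_l), (Build_IHom g_r g_l).
split; apply: IHom_eq => /=.
- by rewrite -!compA (compA_eq va) e2 iid_idem.
- by rewrite eY -!compA e2.
Qed.

Lemma Iobj_factor (X : IObj T) Y (a : Hom T (iob X) Y) (v : Hom T Y (iob X)) :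
  v \o a = iid X -> exists Z : IObj T, iob Z = Y /\ isomorphic (T := IT) X Z.
Proof.
move=> va.
have idem : a \o iid X \o v \o (a \o iid X \o v) = a \o iid X \o v.
  by rewrite -!compA (compA_eq va) !(compA_eq (iid_idem X)).
exists (Build_IObj idem); split => //.
exact: (@Iisomorphic_factor X (Build_IObj idem) a v va).
Qed.

Lemma triang_subcat_Itilde (P : Obj T -> Prop) : triang_subcat P ->
  (forall (X Y Z : IObj T) (f : IHom X Y) (g : IHom Y Z) (h : IHom Z (IshO X)),
     Idist f g h -> P (iob X) -> P (iob Y) ->
     exists Z' : IObj T, P (iob Z') /\ isomorphic (T := IT) Z Z') ->
  triang_subcat (T := IT) (Itilde P).
Proof.
move=> [[X0 hX0] [P_sh [P_desh _]]] P_cone.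
split; [|split; [|split]]; last exact: P_cone.
- by exists (Build_IObj (comp1m (idm X0))).
- by move=> X; apply: P_sh.
- move=> X hX; set e := iid X.
  have [Y0 [hY [u [u' [u'u uu']]]]] := P_desh _ hX.
  have [d Hd] := sh_full L (u' \o e \o u).
  have e2 := compA_eq (iid_idem X).
  have d2 : d \o d = d.
    apply: shH_inj.
    by rewrite shH_comp Hd -!compA (compA_eq uu') comp1m e2.
  exists (Build_IObj d2); split => //.
  apply: (@Iisomorphic_factor (IshO (Build_IObj d2)) X (e \o u) (u' \o e)) => /=.
  + by rewrite Hd -!compA e2.
  + by rewrite Hd -!compA !(compA_eq uu') !comp1m e2 iid_idem.
Qed.

Lemma Idist_retract (X Y Z : IObj T) (f : IHom X Y) (g : IHom Y Z)
    (h : IHom Z (IshO X)) :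
  Idist f g h -> exists X' Y' Z' (f' : Hom T X' Y') (g' : Hom T Y' Z')
    (h' : Hom T Z' (shO X')) (iX : Hom T (iob X) X') (iZ : Hom T (iob Z) Z')
    (pY : Hom T Y' (iob Y)) (pZ : Hom T Z' (iob Z)),
    dist f' g' h' /\ shH iX \o ihom h = h' \o iZ /\ pZ \o g' = ihom g \o pY /\
    pZ \o iZ = iid Z.
Proof.
move=> [X' [Y' [Z' [f' [g' [h' [iX [_ [_ [pY [iZ [pZ [D [_ [_ [_ [_ [_ [Hh
  [_ [_ [_ [_ [Hg [_ [_ [_ HZ]]]]]]]]]]]]]]]]]]]]]]]]]]].
by exists X', Y', Z', f', g', h', iX, iZ, pY, pZ.
Qed.

End IdempotentCompletion.

Section SemiOrthogonalCompletion.
Variable T : TriCat.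
Let IT := IdemComp T.
Variables A B : Obj T -> Prop.
Hypothesis H : weakSOD A B.

Lemma orthB_isomorphic_A (Z : IObj T) :
  (forall B0 (u : Hom T B0 (iob Z)), B B0 -> iid Z \o u = u -> u = 0) ->
  exists Z' : IObj T, A (iob Z') /\ isomorphic (T := IT) Z Z'.
Proof.
move=> orthZ.
have [Bo [Ao [b [a [c [hB [hA D]]]]]]] := sod_triangle H (iob Z).
have [v va] := dist_extend D (orthZ _ _ hB (compA_eq (iid_idem Z) b)).
have [Z' [EZ isoZ]] := Iobj_factor va.
by exists Z'; rewrite EZ.
Qed.

Lemma orthA_isomorphic_B (Z : IObj T) :
  (forall A0 (u : Hom T (iob Z) A0), A A0 -> u \o iid Z = u -> u = 0) ->
  exists Z' : IObj T, B (iob Z') /\ isomorphic (T := IT) Z Z'.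
Proof.
move=> orthZ.
have [Bo [Ao [b [a [c [hB [hA D]]]]]]] := sod_triangle H (iob Z).
have ae : a \o iid Z = 0 by apply: orthZ; rewrite // -compA iid_idem.
have [t bt] := dist_lift D ae.
have [Z' [EZ isoZ]] := Iobj_factor bt.
by exists Z'; rewrite EZ.
Qed.

Lemma Idist_cone_A (X Y Z : IObj T) (f : IHom X Y) (g : IHom Y Z) (h : IHom Z (IshO X)) :
  Idist f g h -> A (iob X) -> A (iob Y) ->
  exists Z' : IObj T, A (iob Z') /\ isomorphic (T := IT) Z Z'.
Proof.
move=> /Idist_retract [X' [Y' [Z' [f' [g' [h' [iX [iZ [pY [pZ [D [Hh [Hg HZ]]]]]]]]]]]]].
move=> hX hY; apply: orthB_isomorphic_A => B0 u hB eu.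
have hu : h' \o (iZ \o u) = 0.
  by rewrite compA -Hh -compA (sod_orth H (ihom h \o u) hB (sod_shift_A H hX)) compm0.
have [t Ht] := dist_lift (dist_rot D) hu.
by rewrite -eu -HZ -compA -Ht compA Hg -compA (sod_orth H (pY \o t) hB hY) compm0.
Qed.

Lemma Idist_cone_B (X Y Z : IObj T) (f : IHom X Y) (g : IHom Y Z) (h : IHom Z (IshO X)) :
  Idist f g h -> B (iob X) -> B (iob Y) ->
  exists Z' : IObj T, B (iob Z') /\ isomorphic (T := IT) Z Z'.
Proof.
move=> /Idist_retract [X' [Y' [Z' [f' [g' [h' [iX [iZ [pY [pZ [D [Hh [Hg HZ]]]]]]]]]]]]].
move=> hX hY; apply: orthA_isomorphic_B => A0 u hA eu.
have ug : u \o pZ \o g' = 0.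
  by rewrite -compA Hg compA (sod_orth H (u \o ihom g) hY hA) comp0m.
have [s Hs] := dist_extend (dist_rot D) ug.
rewrite -eu -HZ compA -Hs -compA -Hh compA.
by rewrite (sod_orth H (s \o shH iX) (sod_shift_B H hX) hA) comp0m.
Qed.

Lemma Idist_decomposition (X : IObj T) :
  exists (Bo Ao : IObj T) (b : IHom Bo X) (a : IHom X Ao) (c : IHom Ao (IshO Bo)),
    B (iob Bo) /\ A (iob Ao) /\ Idist b a c.
Proof.
have [Bo [Ao [b [a [c [hB [hA D]]]]]]] := sod_triangle H (iob X).
have [eB [eA [Hb [Ha [IB [IA Hc]]]]]] := sod_lift_idem H D hB hA (iid_idem X).
set Bo' := Build_IObj IB; set Ao' := Build_IObj IA.
have b_r : b \o eB \o eB = b \o eB by rewrite -compA IB.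
have b_l : iid X \o (b \o eB) = b \o eB by rewrite compA Hb -compA IB.
have a_r : eA \o a \o iid X = eA \o a by rewrite -compA Ha compA IA.
have a_l : eA \o (eA \o a) = eA \o a by rewrite compA IA.
have c_r : c \o eA \o eA = c \o eA by rewrite -compA IA.
have c_l : shH eB \o (c \o eA) = c \o eA by rewrite compA -Hc -compA IA.
exists Bo', Ao', (@Build_IHom T Bo' X _ b_r b_l), (@Build_IHom T X Ao' _ a_r a_l),
  (@Build_IHom T Ao' (IshO Bo') _ c_r c_l).
do 2 split => //.
exists Bo, (iob X), Ao, b, a, c, eB, eB, (iid X), (iid X), eA, eA => /=.
do !split => //; by rewrite ?iid_idem ?a_l ?Ha ?b_r ?Hb ?c_r ?Hc.
Qed.

Lemma weakSOD_Itilde : weakSOD (T := IT) (Itilde A) (Itilde B).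
Proof.
have [SA [SB _]] := H.
split; [|split; [|split]].
- exact: triang_subcat_Itilde SA Idist_cone_A.
- exact: triang_subcat_Itilde SB Idist_cone_B.
- by move=> Bo Ao hB hA f; apply: IHom_eq; apply: (sod_orth H).
- exact: Idist_decomposition.
Qed.

End SemiOrthogonalCompletion.

Section SemiOrthogonalIdempotents.
Variable T : TriCat.
Variables A B : Obj T -> Prop.
Hypothesis H : weakSOD A B.

Lemma sod_retract_A X K (i : Hom T K X) (p : Hom T X K) :
  p \o i = 1 -> A X -> exists K', A K' /\ isomorphic K K'.
Proof.
move=> pi hX.
have [Bo [Ao [b [a [c [hB [hA D]]]]]]] := sod_triangle H K.
have b0 : 1 \o b = 0.
  by rewrite -pi -compA (sod_orth H (i \o b) hB hX) compm0.
have [s sa] := dist_extend D b0.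
exists Ao; split => //; exists a, s; split => //.
apply: subm_eq0; apply: (sod_epi H D hB hA).
by rewrite compBl -compA sa compm1 comp1m addmN.
Qed.

Lemma sod_retract_B X K (i : Hom T K X) (p : Hom T X K) :
  p \o i = 1 -> B X -> exists K', B K' /\ isomorphic K K'.
Proof.
move=> pi hX.
have [Bo [Ao [b [a [c [hB [hA D]]]]]]] := sod_triangle H K.
have a0 : a \o 1 = 0.
  by rewrite -pi compA (sod_orth H (a \o p) hX hA) comp0m.
have [t bt] := dist_lift D a0.
exists Bo; split => //; exists t, b; split => //.
apply: subm_eq0; apply: (sod_mono H D hA hB).
by rewrite compBr compA bt comp1m compm1 addmN.
Qed.

Lemma idem_complete_sod_components :
  idem_complete (T := T) (fun _ => True) -> idem_complete A /\ idem_complete B.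
Proof.
move=> C; split=> X e hX ee; apply: idem_splits_replete (C X e I ee).
- by move=> K i p pi; apply: sod_retract_A pi hX.
- by move=> K i p pi; apply: sod_retract_B pi hX.
Qed.

Hypotheses (CA : idem_complete A) (CB : idem_complete B).

Lemma sod_idem_retract X0 (e : Hom T X0 X0) :
  e \o e = e -> exists Y (r : Hom T X0 Y) (s : Hom T Y X0), r \o s = 1 /\ s \o r = e.
Proof.
move=> ee.
have [B0 [A0 [b [a [c [hB [hA D]]]]]]] := sod_triangle H X0.
have [eB [eA [eb [ae [eB2 [eA2 ceA]]]]]] := sod_lift_idem H D hB hA ee.
have [BI [qB [jB [hBI [qjB jqB]]]]] := idem_complete_retract CB hB eB2.
have [AI [qA [jA [hAI [qjA jqA]]]]] := idem_complete_retract CA hA eA2.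
have [Y [be [al DY]]] := dist_of_third_map (shH qB \o c \o jA).
have [ph [phb alph]] : exists ph, ph \o b = be \o qB /\ qA \o a = al \o ph.
  apply: (dist_fill_middle D DY).
  rewrite -compA jqA -compA ceA compA -shH_comp.
  by rewrite -jqB compA qjB comp1m.
have [ps [psbe aps]] : exists ps, ps \o be = b \o jB /\ jA \o al = a \o ps.
  apply: (dist_fill_middle DY D).
  rewrite !compA -shH_comp jqB -ceA -compA.
  by rewrite -jqA -compA qjA compm1.
have [m [phpsm [mbe alm]]] : exists m, ph \o ps \o m = 1 /\ m \o be = be /\ al \o m = al.
  apply: (sod_right_inverse H DY hBI hAI).
    by rewrite compBl comp1m -compA psbe compA phb -compA qjB compm1 addmN.
  by rewrite compBr compm1 compA -alph -compA -aps compA qjA comp1m addmN.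
have rs : ph \o (ps \o m) = 1 by rewrite compA.
have db : (ps \o m \o ph - e) \o b = 0.
  by rewrite compBl -!compA phb !compA -(compA _ m) mbe psbe -compA jqB eb addmN.
have ad : a \o (ps \o m \o ph - e) = 0.
  by rewrite compBr !compA -aps -(compA jA) alm -compA -alph compA jqA ae addmN.
have [r [s [rs' sr]]] := sod_idem_retract_perturb H D hB hA ee rs db ad.
by exists Y, r, s.
Qed.

Lemma idem_complete_of_sod_components : idem_complete (T := T) (fun _ => True).
Proof.
move=> X e _ ee.
have ee' : (1 - e) \o (1 - e) = 1 - e.
  by rewrite compBl comp1m compBr compm1 ee addmN oppm0 addm0.
exact: idem_splits_of_retracts ee (sod_idem_retract ee) (sod_idem_retract ee').
Qed.

End SemiOrthogonalIdempotents.

Theorem lemma4p6 (T : TriCat) (A B : Obj T -> Prop) :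
  weakSOD A B ->
  weakSOD (T := IdemComp T) (Itilde A) (Itilde B) /\
  (idem_complete (fun _ : Obj T => True) <-> idem_complete A /\ idem_complete B).
Proof.
move=> H; split; first exact: weakSOD_Itilde H.
split; first exact: idem_complete_sod_components H.
by move=> [CA CB]; apply: idem_complete_of_sod_components H CA CB.
Qed.
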